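(* Let $q\in\mathbb{N}$, $q\ge 1$, and $p\ge 3$. If a graph $G$ is $p$-ordered, then the $q$-complete graph $C_q(G)$ is $q(p-1)$-connected.
   Context: For a graph $G=(V,E)$ and $q\ge 1$, the $q$-complete graph $C_q(G)=(V_q,E_q)$ has vertex set $V_q=V^1\uplus\dots\uplus V^q$, where $V^i=\{v^i\mid v\in V\}$ is a copy of $V$, and edge set $E_q=\bigcup_{i,j\in\{1,\dots,q\}}\{\{u^i,v^j\}\mid \{u,v\}\in E\}$. For an integer $p\ge 3$, a graph is $p$-ordered if for every $p$-tuple $(x_1,\dots,x_p)$ of distinct vertices there is a cycle visiting $x_1,\dots,x_p$ in this order. A graph is $k$-connected if it has more than $k$ vertices and remains connected after deleting any set of fewer than $k$ vertices. *)

From mathcomp Require Import all_boot.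
Set Implicit Arguments. Unset Strict Implicit. Unset Printing Implicit Defensive.

(* A (finite simple) graph is a symmetric irreflexive relation e on a finType. *)

Definition is_graph_cycle (T : finType) (e : rel T) (c : seq T) : Prop :=
  [/\ 3 <= size c, uniq c & cycle e c].

(* Since a cycle may be rotated/reversed as a list, "visiting
   x_1,...,x_p in this order" is expressed as xs being a subsequence of c. *)
Definition p_ordered (T : finType) (e : rel T) (p : nat) : Prop :=
  forall xs : seq T, size xs = p -> uniq xs ->
    exists c : seq T, is_graph_cycle e c /\ subseq xs c.

(* The q-complete graph C_q(G): vertices (v, i) with i < q (the copy v^i),
   and {u^i, v^j} an edge iff {u, v} is an edge of G. *)
Definition qcomplete (T : finType) (e : rel T) (q : nat) : rel (T * 'I_q) :=
  fun x y => e x.1 y.1.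
Arguments qcomplete [T] e q _ _.

Definition induced_minus (V : finType) (r : rel V) (S : {set V}) : rel V :=
  fun x y => [&& r x y, x \notin S & y \notin S].

Definition k_connected (V : finType) (r : rel V) (k : nat) : Prop :=
  k < #|V| /\
  forall S : {set V}, #|S| < k ->
    forall x y : V, x \notin S -> y \notin S -> connect (induced_minus r S) x y.

From mathcomp Require Import all_boot.
From mathcomp Require Import zify.
Set Implicit Arguments. Unset Strict Implicit. Unset Printing Implicit Defensive.

(* Let S be a set of fewer than q(p-1) vertices of C_q(G).  Call a vertex v
   of G dead when all q copies of v lie in S, and alive otherwise; each dead
   vertex accounts for q elements of S, so at most p-2 vertices are dead.
   Call two vertices u, v of G linked when every surviving copy of u is
   joined to every surviving copy of v in C_q(G) - S.  Adjacent vertices are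
   linked, and linkage is transitive through alive vertices, so a G-path
   whose inner vertices are alive links its endpoints.  Two distinct alive
   vertices u, v are linked: pad the dead vertices to a list r of p-2
   vertices avoiding u, v; the p-ordered property yields a cycle visiting
   u, v, r in this order, and the arc of that cycle from u to v avoids r,
   hence has only alive inner vertices.  Two copies of one alive vertex are
   joined through a second alive vertex, which exists since G has at least
   p vertices. *)

Lemma subseq_cons_split (A : eqType) (x : A) (s c : seq A) :
  subseq (x :: s) c -> exists c1 c2, c = c1 ++ x :: c2 /\ subseq s c2.
Proof.
elim: c => [|y c IH] //=.
case: eqP => [<- sc|_ /IH [c1 [c2 [-> sc2]]]]; first by exists [::], c.
by exists (y :: c1), c2.
Qed.

Lemma cycle_arc_avoiding (A : eqType) (e : rel A) (a b : A) (r c : seq A) :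
  uniq c -> cycle e c -> subseq [:: a, b & r] c ->
  exists2 s, path e a (rcons s b) & {in s, forall z, z \notin r}.
Proof.
move=> uc cc sc.
have [c1 [d [Ec sd]]] := subseq_cons_split sc.
have [s [c3 [Ed sr]]] := subseq_cons_split sd.
subst c d; exists s.
  move: cc; rewrite (cycle_path a) cat_path /= cat_path /= => /and5P [_ _ Pa Pb _].
  by rewrite rcons_path Pa Pb.
have : uniq (s ++ b :: c3).
  by move: uc; rewrite cat_uniq => /and3P [_ _ /andP []].
rewrite cat_uniq => /and3P [_ /hasPn s_c3 _].
move=> z zs; apply/negP => /(mem_subseq sr) zc3.
by have := s_c3 z; rewrite inE zc3 orbT zs => /(_ isT).
Qed.

Lemma pad_set (T : finType) (D X : {set T}) (n : nat) :
  [disjoint D & X] -> #|D| <= n -> n + #|X| <= #|T| ->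
  exists r : seq T,
    [/\ size r = n, uniq r, {subset D <= r} & {in r, forall v, v \notin X}].
Proof.
move=> DX Dn nT; set C := ~: (D :|: X).
exists (take n (enum D ++ enum C)); split.
- rewrite size_takel // size_cat -!cardE.
  by have := cardsC (D :|: X); have := cardsU D X; rewrite -/C; lia.
- apply: take_uniq; rewrite cat_uniq !enum_uniq /= andbT.
  by apply/hasPn => v; rewrite !mem_enum !inE negb_or => /andP [].
- move=> v vD; rewrite -(cat_take_drop #|D| (take _ _)) mem_cat take_takel //.
  by rewrite cardE take_size_cat // mem_enum vD.
- move=> v /mem_take; rewrite mem_cat !mem_enum => /orP [vD|]; last first.
    by rewrite !inE negb_or => /andP [].
  by apply: contraL vD => vX; rewrite (disjointFl DX).
Qed.

Section SurvivingCopies.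
Variables (T : finType) (e : rel T) (q : nat) (S : {set T * 'I_q}).

Definition alive (v : T) : bool := [exists k, (v, k) \notin S].

Definition dead : {set T} := [set v | ~~ alive v].

Definition linked (a b : T) : Prop :=
  forall i j, (a, i) \notin S -> (b, j) \notin S ->
    connect (induced_minus (qcomplete e q) S) (a, i) (b, j).

Lemma linked_edge a b : e a b -> linked a b.
Proof.
move=> eab i j Sa Sb; apply: connect1.
by rewrite /induced_minus /qcomplete /= eab Sa Sb.
Qed.

Lemma linked_trans a b c : alive b -> linked a b -> linked b c -> linked a c.
Proof.
move=> /existsP [k Sb] lab lbc i j Sa Sc.
exact: connect_trans (lab i k Sa Sb) (lbc k j Sb Sc).
Qed.

Lemma linked_path s a b : all alive s -> path e a (rcons s b) -> linked a b.
Proof.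
elim: s a => [|y s IH] a /=; first by move=> _ /andP [eab _]; apply: linked_edge.
case/andP=> alive_y alive_s /andP [eay P].
exact: linked_trans alive_y (linked_edge eay) (IH y alive_s P).
Qed.

(* Each dead vertex contributes q vertices to S. *)
Lemma card_dead_lt n : #|S| < q * n -> #|dead| < n.
Proof.
move=> Sn.
have sub : setX dead [set: 'I_q] \subset S.
  apply/subsetP => -[v k]; rewrite !inE /= andbT /alive negb_exists.
  by move=> /forallP /(_ k); rewrite negbK.
have := subset_leq_card sub; rewrite cardsX cardsT card_ord => le_S.
by have := leq_ltn_trans le_S Sn; rewrite mulnC ltn_mul2l => /andP [].
Qed.
End SurvivingCopies.

(* In a p-ordered graph with at most p-2 dead vertices, any two distinct
   alive vertices are linked: the cycle through u, v and all dead vertices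
   provides a path from u to v through alive vertices. *)
Lemma p_ordered_linked (T : finType) (e : rel T) (q p : nat)
    (S : {set T * 'I_q}) (u v : T) :
  2 <= p -> p <= #|T| -> p_ordered e p -> #|dead S| <= p - 2 ->
  alive S u -> alive S v -> u != v -> linked e S u v.
Proof.
move=> p2 pT pord deadp au av uv.
have dead_uv : [disjoint dead S & [set u; v]].
  rewrite disjoint_subset; apply/subsetP => z zd; rewrite !inE.
  by apply/norP; split; apply/eqP => Ez; move: zd; rewrite Ez in_set ?au ?av.
have room : p - 2 + #|[set u; v]| <= #|T|.
  by have := max_card [set u; v]; rewrite cards2 uv; lia.
have [r [size_r uniq_r dead_r r_uv]] := pad_set dead_uv deadp room.
have [||c [[_ uc cc] s_uvr]] := pord [:: u, v & r].
- by rewrite /= size_r; lia.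
- rewrite /= inE negb_or uv uniq_r andbT.
  by apply/andP; split; apply/negP => /r_uv; rewrite !inE eqxx ?orbT.
have [s Ps s_r] := cycle_arc_avoiding uc cc s_uvr.
apply: linked_path Ps; apply/allP => z zs.
by apply: contraR (s_r z zs) => not_alive; apply: dead_r; rewrite inE.
Qed.

Lemma alive_companion (T : finType) (q : nat) (S : {set T * 'I_q}) (a : T) :
  #|dead S| + 2 <= #|T| -> alive S a -> exists2 w, alive S w & w != a.
Proof.
move=> room alive_a.
have : 1 < #|~: dead S| by have := cardsC (dead S); lia.
rewrite (cardsD1 a) !inE negbK alive_a => /card_gt0P [w].
by rewrite !inE negbK => /andP [wa alive_w]; exists w.
Qed.

Theorem lemma5p5 (T : finType) (e : rel T) (q p : nat) :
  1 <= q -> 3 <= p ->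
  symmetric e -> irreflexive e ->
  p <= #|T| ->
  p_ordered e p ->
  k_connected (qcomplete e q) (q * (p - 1)).
Proof.
move=> q_gt0 p_ge3 _ _ pT pord; split.
  by rewrite card_prod card_ord; nia.
move=> S small_S [a i] [b j] Sa Sb.
have deadp : #|dead S| <= p - 2 by have := card_dead_lt small_S; lia.
have alive_a : alive S a by apply/existsP; exists i.
have alive_b : alive S b by apply/existsP; exists j.
have link := p_ordered_linked (ltnW p_ge3) pT pord deadp.
have [eq_ab|ab] := eqVneq a b; last exact: link a b alive_a alive_b ab i j Sa Sb.
subst b.
have [|w alive_w wa] := alive_companion _ alive_a; first by lia.
have aw : a != w by rewrite eq_sym.
exact: linked_trans alive_w (link a w alive_a alive_w aw)
  (link w a alive_w alive_a wa) _ _ Sa Sb.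
Qed.
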